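(* For every (closed) term $P$: $P$ is doomed if and only if $[\![P]\!] = \varnothing$.
   Context: Fix a set $\Sigma$ of events. Terms: $P, Q ::= \mathit{STOP} \mid \mathit{FAIL} \mid ?x{:}E \rightarrow P \mid P \,\Box\, Q \mid P \parallel_E Q$, where an event set $E$ is $f(y_1,\dots,y_n)$ with $f : \Sigma^n \to 2^\Sigma$ computable and each $y_i$ an event variable or event; $x$ is bound in $P$ in $?x{:}E\rightarrow P$. Terms are closed, so each $E$ denotes a subset of $\Sigma$; $[e/x]P$ is substitution of event $e$ for $x$. Doomed terms are given by the grammar $D ::= \mathit{FAIL} \mid D \Box D \mid D \parallel_E P \mid P \parallel_E D$ with $P$ an arbitrary term. Trace semantics. A trace set is a prefix-closed subset of $\Sigma^*$ (possibly empty); $\varepsilon$ is the empty trace. For a trace set $T$: $eT := \{\varepsilon\} \cup \{et \mid t \in T\}$, $T(e) := \{t \mid et \in T\}$. For $E \subseteq \Sigma$, $\parallel_E$ on trace sets is the unique function with $\varnothing \parallel_E T = T \parallel_E \varnothing = \varnothing$ and, for nonempty $T_1, T_2$, $T_1 \parallel_E T_2 = \bigcup_{e \in E} e(T_1(e) \parallel_E T_2(e)) \cup \bigcup_{e \in \Sigma\setminus E}( e(T_1(e) \parallel_E T_2) \cup e(T_1 \parallel_E T_2(e)))$. The semantics: $[\![\mathit{STOP}]\!] = \{\varepsilon\}$, $[\![\mathit{FAIL}]\!] = \varnothing$, $[\![?x{:}E \rightarrow P]\!] = \{\varepsilon\} \cup \bigcup_{e \in E} e[\![ [e/x]P ]\!]$,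 $[\![P \Box Q]\!] = [\![P]\!] \cup [\![Q]\!]$, $[\![P \parallel_E Q]\!] = [\![P]\!] \parallel_E [\![Q]\!]$. *)

From Stdlib Require Import List PeanoNat.
Import ListNotations.
Set Implicit Arguments.

Section Calculus.
Variable Sigma : Type.

Inductive atom : Type :=
| AVar : nat -> atom
| AEv  : Sigma -> atom.

(* event set E = f(y_1,...,y_n); f : Sigma^n -> 2^Sigma, computable, so
   represented as a Rocq function returning a boolean membership test;
   n is the length of the argument list *)
Inductive evset : Type :=
| EvSet : (list Sigma -> Sigma -> bool) -> list atom -> evset.

Inductive term : Type :=
| STOP : term
| FAIL : term
| Prefix : nat -> evset -> term -> term        (* ?x:E -> P, x bound in P *)
| Choice : term -> term -> term
| Par : term -> evset -> term -> term.

Definition subst_atom (x : nat) (e : Sigma) (a : atom) : atom :=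
  match a with
  | AVar y => if Nat.eqb x y then AEv e else a
  | AEv _ => a
  end.

Definition subst_evset (x : nat) (e : Sigma) (E : evset) : evset :=
  match E with EvSet f ys => EvSet f (map (subst_atom x e) ys) end.

Fixpoint subst (x : nat) (e : Sigma) (P : term) : term :=
  match P with
  | STOP => STOP
  | FAIL => FAIL
  | Prefix y E Q =>
      Prefix y (subst_evset x e E) (if Nat.eqb x y then Q else subst x e Q)
  | Choice Q R => Choice (subst x e Q) (subst x e R)
  | Par Q E R => Par (subst x e Q) (subst_evset x e E) (subst x e R)
  end.

Definition atom_closed (bound : list nat) (a : atom) : Prop :=
  match a with AVar y => In y bound | AEv _ => True end.

Definition evset_closed (bound : list nat) (E : evset) : Prop :=
  match E with EvSet _ ys => Forall (atom_closed bound) ys end.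

Fixpoint closed_in (bound : list nat) (P : term) : Prop :=
  match P with
  | STOP | FAIL => True
  | Prefix x E Q => evset_closed bound E /\ closed_in (x :: bound) Q
  | Choice Q R => closed_in bound Q /\ closed_in bound R
  | Par Q E R => closed_in bound Q /\ evset_closed bound E /\ closed_in bound R
  end.

Definition closed (P : term) : Prop := closed_in [] P.

(* denotation of a closed event set (open ones, which never occur in closed
   terms, are sent to the empty set) *)
Fixpoint atoms_val (ys : list atom) : option (list Sigma) :=
  match ys with
  | [] => Some []
  | AEv e :: ys' => match atoms_val ys' with Some l => Some (e :: l) | None => None end
  | AVar _ :: _ => None
  end.

Definition evset_mem (E : evset) (e : Sigma) : Prop :=
  match E with
  | EvSet f ys => match atoms_val ys with Some l => f l e = true | None => False end
  end.

Definition tset := list Sigma -> Prop.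

Definition after (T : tset) (e : Sigma) : tset := fun t => T (e :: t).
Definition nonempty (T : tset) : Prop := exists s, T s.

Fixpoint par (E : Sigma -> Prop) (T1 T2 : tset) (t : list Sigma) : Prop :=
  match t with
  | [] => nonempty T1 /\ nonempty T2
  | e :: t' =>
      nonempty T1 /\ nonempty T2 /\
      ((E e /\ par E (after T1 e) (after T2 e) t') \/
       (~ E e /\ (par E (after T1 e) T2 t' \/ par E T1 (after T2 e) t')))
  end.

Fixpoint tsize (P : term) : nat :=
  match P with
  | STOP | FAIL => 1
  | Prefix _ _ Q => S (tsize Q)
  | Choice Q R => S (tsize Q + tsize R)
  | Par Q _ R => S (tsize Q + tsize R)
  end.

(* fuelled semantics; substitution preserves tsize, so fuel tsize P suffices *)
Fixpoint semf (n : nat) (P : term) : tset :=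
  match n with
  | O => fun _ => False
  | S n' =>
    match P with
    | STOP => fun t => t = []
    | FAIL => fun _ => False
    | Prefix x E Q => fun t =>
        match t with
        | [] => True
        | e :: t' => evset_mem E e /\ semf n' (subst x e Q) t'
        end
    | Choice Q R => fun t => semf n' Q t \/ semf n' R t
    | Par Q E R => par (evset_mem E) (semf n' Q) (semf n' R)
    end
  end.

Definition sem (P : term) : tset := semf (tsize P) P.

Inductive doomed : term -> Prop :=
| doomed_fail : doomed FAIL
| doomed_choice : forall D1 D2, doomed D1 -> doomed D2 -> doomed (Choice D1 D2)
| doomed_parl : forall D E P, doomed D -> doomed (Par D E P)
| doomed_parr : forall P E D, doomed D -> doomed (Par P E D).

End Calculus.

(* A doomed term denotes the empty trace set at every fuel level, because
   FAIL does, a choice of two empty sets is empty, and T1 ||_E T2 is empty as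
   soon as one side is.  Conversely, by induction on P, every term that is not
   doomed has the empty trace in its semantics: STOP and prefixes contain it
   outright, a choice inherits it from a non-doomed branch, and a parallel
   composition of two non-doomed terms contains it because both sides are
   nonempty. *)
From Stdlib Require Import List Lia.
Import ListNotations.

Lemma par_nonempty {Sigma : Type} {E : Sigma -> Prop} {T1 T2 : tset Sigma} {t} :
  par E T1 T2 t -> nonempty T1 /\ nonempty T2.
Proof. destruct t; simpl; tauto. Qed.

Lemma semf_doomed {Sigma : Type} {P : term Sigma} :
  doomed P -> forall n t, ~ semf n P t.
Proof.
  induction 1 as [| D1 D2 _ IH1 _ IH2 | D E Q _ IH | Q E D _ IH];
    intros [|n] t Ht; simpl in Ht; auto.
  - destruct Ht as [Ht | Ht]; [exact (IH1 n t Ht) | exact (IH2 n t Ht)].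
  - destruct (par_nonempty Ht) as [[s Hs] _]; exact (IH n s Hs).
  - destruct (par_nonempty Ht) as [_ [s Hs]]; exact (IH n s Hs).
Qed.

Lemma doomed_or_semf_nil {Sigma : Type} (P : term Sigma) n :
  tsize P <= n -> doomed P \/ semf n P [].
Proof.
  revert n; induction P as [| | x E Q _ | Q IHQ R IHR | Q IHQ E R IHR];
    intros [|n] Hn; simpl in *; try (exfalso; lia).
  - right; reflexivity.
  - left; constructor.
  - right; exact I.
  - destruct (IHQ n ltac:(lia)) as [DQ | HQ]; [| right; left; exact HQ].
    destruct (IHR n ltac:(lia)) as [DR | HR]; [| right; right; exact HR].
    left; constructor; assumption.
  - destruct (IHQ n ltac:(lia)) as [DQ | HQ]; [left; constructor; exact DQ |].
    destruct (IHR n ltac:(lia)) as [DR | HR]; [left; constructor; exact DR |].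
    right; split; [exists [] | exists []]; assumption.
Qed.

Theorem proposition2 (Sigma : Type) (P : term Sigma) :
  closed P -> (doomed P <-> (forall t : list Sigma, ~ sem P t)).
Proof.
  intros _; split.
  - intros D t; exact (semf_doomed D (tsize P) t).
  - intros Hempty.
    destruct (doomed_or_semf_nil P (tsize P) (le_n _)) as [D | Hnil];
      [exact D | contradiction (Hempty [] Hnil)].
Qed.
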